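(* Let $X=\{a,b,c\}$, $S=X^*$, and let $\mathcal{L}\subseteq 2^{X^*}$ be a nontrivial language family which is closed under finite unions, under left markers ($wL\in\mathcal{L}$ for $w\in X^*$, $L\in\mathcal{L}$), under left quotients by words ($w^{-1}L=\{v\in X^*: wv\in L\}\in\mathcal{L}$ for $w\in X^*$, $L\in\mathcal{L}$), and under regular variation ($L\cup R\in\mathcal{L}$ and $L\cap R\in\mathcal{L}$ for all $L\in\mathcal{L}$ and regular $R\subseteq X^*$). Let $A\subseteq X^*$ with $A\notin\mathcal{L}$ or $X^*\setminus A\notin\mathcal{L}$, and put $A_{xy}=xA\cup y(X^*\setminus A)$ for $x,y\in X$ and $\mathbf{C}(A)=(A_{ab},A_{bc},A_{ca})$. Then $\mathbf{C}(A)\notin\mathit{class}_3(\mathcal{L})$, and for every classification problem $\mathbf{B}\le\mathbf{C}(A)$ with $|\mathbf{B}|=3$ we have $\mathbf{B}\notin\mathit{core}_3(\mathcal{L})$.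
   Context: $\mathcal{L}$ is nontrivial if $\emptyset,X^*\in\mathcal{L}$ and for all $Q\in\mathcal{L}$ and finite $E\subseteq X^*$ both $Q\cup E\in\mathcal{L}$ and $Q\setminus E\in\mathcal{L}$. A classification problem is a vector $(A_1,\dots,A_k)$, $k\ge1$, of pairwise disjoint infinite subsets of $X^*$, of length $k$. For vectors $\mathbf{B}=(B_1,\dots,B_m)$, $\mathbf{Q}=(Q_1,\dots,Q_k)$, $\mathbf{B}\le\mathbf{Q}$ means $1\le m\le k$ and there is an injective $\sigma:\{1,\dots,m\}\to\{1,\dots,k\}$ with $B_i\subseteq Q_{\sigma(i)}$. An $\mathcal{L}$-partition is a vector of pairwise disjoint members of $\mathcal{L}$ whose union is $X^*$. $\mathit{class}_k(\mathcal{L})$: classification problems $\mathbf{A}$ of length $k$ with $\mathbf{A}\le\mathbf{Q}$ for some $\mathcal{L}$-partition $\mathbf{Q}$ of length $k$. For $k>1$, $\mathit{core}_k(\mathcal{L})$ is the set of classification problems $\mathbf{A}$ of length $k$ such that every classification problem $\mathbf{A}'\le\mathbf{A}$ with $|\mathbf{A}'|>1$ satisfies $\mathbf{A}'\notin\mathit{class}_{|\mathbf{A}'|}(\mathcal{L})$. *)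

From mathcomp Require Import all_boot.
Set Implicit Arguments. Unset Strict Implicit. Unset Printing Implicit Defensive.

Inductive letter : Type := la | lb | lc.
Definition word := seq letter.
Definition lang := word -> Prop.
Definition lfamily := lang -> Prop.

Definition lempty : lang := fun _ => False.
Definition lfull : lang := fun _ => True.
Definition lunion (P Q : lang) : lang := fun w => P w \/ Q w.
Definition linter (P Q : lang) : lang := fun w => P w /\ Q w.
Definition ldiff (P Q : lang) : lang := fun w => P w /\ ~ Q w.
Definition lcompl (P : lang) : lang := fun w => ~ P w.

Fixpoint inlist (w : word) (s : seq word) : Prop :=
  if s is x :: s' then x = w \/ inlist w s' else False.
Definition lfinite (E : lang) : Prop :=
  exists s : seq word, forall w, E w -> inlist w s.

Definition regular (R : lang) : Prop :=
  exists (Q : finType) (q0 : Q) (d : Q -> letter -> Q) (F : Q -> bool),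
    forall w, R w <-> F (foldl d q0 w).

Definition lmarker (w : word) (P : lang) : lang :=
  fun u => exists v, P v /\ u = w ++ v.
Definition lquot (w : word) (P : lang) : lang := fun v => P (w ++ v).

Definition nontrivial (L : lfamily) : Prop :=
  L lempty /\ L lfull /\
  forall Q E, L Q -> lfinite E -> L (lunion Q E) /\ L (ldiff Q E).

Definition closed_union (L : lfamily) : Prop :=
  forall P Q, L P -> L Q -> L (lunion P Q).
Definition closed_marker (L : lfamily) : Prop :=
  forall w P, L P -> L (lmarker w P).
Definition closed_quot (L : lfamily) : Prop :=
  forall w P, L P -> L (lquot w P).
Definition closed_regvar (L : lfamily) : Prop :=
  forall P R, L P -> regular R -> L (lunion P R) /\ L (linter P R).

Definition is_cp (k : nat) (A : 'I_k -> lang) : Prop :=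
  1 <= k /\
  (forall i j, i <> j -> forall w, A i w -> A j w -> False) /\
  (forall i, ~ lfinite (A i)).

Definition vle (m k : nat) (B : 'I_m -> lang) (Q : 'I_k -> lang) : Prop :=
  1 <= m /\ m <= k /\
  exists sigma : 'I_m -> 'I_k, injective sigma /\
    forall i w, B i w -> Q (sigma i) w.

Definition Lpartition (L : lfamily) (k : nat) (Q : 'I_k -> lang) : Prop :=
  (forall i, L (Q i)) /\
  (forall i j, i <> j -> forall w, Q i w -> Q j w -> False) /\
  (forall w, exists i, Q i w).

Definition in_class (L : lfamily) (k : nat) (A : 'I_k -> lang) : Prop :=
  is_cp A /\ exists Q : 'I_k -> lang, Lpartition L Q /\ vle A Q.

Definition in_core (L : lfamily) (k : nat) (A : 'I_k -> lang) : Prop :=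
  1 < k /\ is_cp A /\
  forall (m : nat) (A' : 'I_m -> lang),
    is_cp A' -> vle A' A -> 1 < m -> ~ in_class L A'.

Definition Axy (x y : letter) (A : lang) : lang :=
  lunion (lmarker [:: x] A) (lmarker [:: y] (lcompl A)).

Definition CA (A : lang) : 'I_3 -> lang :=
  fun i => if val i == 0 then Axy la lb A
           else if val i == 1 then Axy lb lc A
           else Axy lc la A.

(* Words beginning with a lie in A_ab or A_ca, and those two components separate aA from
   a(X^* \ A); a partition separating them would therefore give A and its complement as left
   quotients by a of members of L.  For the core claim: if two components of B had infinitely
   many words beginning with different letters, the regular partition (lX^*, its complement)
   would separate them.  So all three components have infinitely many words with the same
   first letter l, and B meets all three components of C(A); but l is a first letter of only
   two of A_ab, A_bc, A_ca. *)

From HB Require Import structures.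
From Stdlib Require Import Classical FunctionalExtensionality PropExtensionality.
From mathcomp Require Import all_boot.

Set Implicit Arguments.
Unset Strict Implicit.
Unset Printing Implicit Defensive.

Definition letter_eqb (x y : letter) : bool :=
  match x, y with la, la | lb, lb | lc, lc => true | _, _ => false end.

Lemma letter_eqP : Equality.axiom letter_eqb.
Proof. by case; case; constructor. Qed.

HB.instance Definition _ := hasDecEq.Build letter letter_eqP.

Definition lstart (l : letter) : lang := fun w => ohead w == Some l.

Lemma lfamily_ext (L : lfamily) (P Q : lang) :
  (forall w, P w <-> Q w) -> L P -> L Q.
Proof.
move=> PQ; have -> // : P = Q.
by apply: functional_extensionality => w; apply: propositional_extensionality.
Qed.

Lemma inlistP (w : word) (s : seq word) : inlist w s <-> w \in s.
Proof.
elim: s => [|x s IH] //=; rewrite in_cons; split.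
- by case=> [->|/IH ->]; rewrite ?eqxx ?orbT.
- by case/orP=> [/eqP ->|/IH]; [left | right].
Qed.

Lemma lfinite_union (P Q : lang) : lfinite P -> lfinite Q -> lfinite (lunion P Q).
Proof.
move=> [s Ps] [t Qt]; exists (s ++ t) => w; rewrite inlistP mem_cat.
by case=> [/Ps|/Qt] /inlistP ->; rewrite ?orbT.
Qed.

Lemma lfinite_sub (P Q : lang) : (forall w, P w -> Q w) -> lfinite Q -> lfinite P.
Proof. by move=> PQ [s Qs]; exists s => w /PQ /Qs. Qed.

Lemma nonfinite_inhabited (P : lang) : ~ lfinite P -> exists w, P w.
Proof.
move=> infP; apply: NNPP => noP; apply: infP; exists [::] => w Pw.
by apply: noP; exists w.
Qed.

Lemma infinite_lstart (B : lang) :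
  ~ lfinite B -> exists l, ~ lfinite (linter B (lstart l)).
Proof.
move=> infB; apply: NNPP => /not_ex_not_all finB; apply: infB.
apply: (@lfinite_sub _ (lunion (fun w => w = [::])
  (lunion (linter B (lstart la))
    (lunion (linter B (lstart lb)) (linter B (lstart lc)))))).
- by move=> [|[] v] Bv; [left | right; left | right; right; left | right; right; right].
- apply: lfinite_union; first by exists [:: [::]] => w ->; left.
  by do 2 apply: lfinite_union => //.
Qed.

Lemma regular_lcompl (R : lang) : regular R -> regular (lcompl R).
Proof.
move=> [Q [q0 [d [F RF]]]]; exists Q, q0, d, (fun q => ~~ F q) => w.
by split=> [nRw | /negP nFw Rw]; [apply/negP => /RF | apply/nFw/RF].
Qed.

Lemma regular_first_letter (p : pred (option letter)) :
  regular (fun w => p (ohead w)).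
Proof.
pose d (q : bool * bool) x := if q.1 then q else (true, p (Some x)).
exists ((bool * bool)%type : finType), (false, p None), d, snd.
have stay b v : foldl d (true, b) v = (true, b) by elim: v.
by case=> [|x v] //=; rewrite stay.
Qed.

Lemma regular_lstart (l : letter) : regular (lstart l).
Proof. exact: regular_first_letter. Qed.

Lemma regular_in_family (L : lfamily) (R : lang) :
  nontrivial L -> closed_regvar L -> regular R -> L R.
Proof.
move=> [L0 _] Lr regR; apply: lfamily_ext (proj1 (Lr _ _ L0 regR)).
by move=> w; split=> [[] | Rw]; last right.
Qed.

Definition lpair (P Q : lang) : 'I_2 -> lang :=
  fun k => if val k == 0 then P else Q.

Lemma is_cp_lpair (P Q : lang) :
  (forall w, P w -> Q w -> False) -> ~ lfinite P -> ~ lfinite Q ->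
  is_cp (lpair P Q).
Proof.
move=> PQ infP infQ; split=> //; split; last by case=> [[|[|k]] ?].
move=> [[|[|i]] ?] [[|[|j]] ?] // ij w; rewrite /lpair /= => Pw Qw.
all: first [exact: PQ Pw Qw | exact: PQ Qw Pw | by case: ij; apply: val_inj].
Qed.

Lemma vle_lpair (k : nat) (B : 'I_k -> lang) (i j : 'I_k) (P Q : lang) :
  1 < k -> i <> j -> (forall w, P w -> B i w) -> (forall w, Q w -> B j w) ->
  vle (lpair P Q) B.
Proof.
move=> k_gt1 ij PB QB; split=> //; split=> //.
exists (fun t : 'I_2 => if val t == 0 then i else j).
split; last by case=> [[|[|t]] ?].
move=> [[|[|t]] ?] [[|[|u]] ?] //= st; apply: val_inj => //=.
all: by case: ij; rewrite st.
Qed.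

Lemma in_class_separated (L : lfamily) (P Q R : lang) :
  L R -> L (lcompl R) -> is_cp (lpair P Q) ->
  (forall w, P w -> R w) -> (forall w, Q w -> ~ R w) -> in_class L (lpair P Q).
Proof.
move=> LR LRc cpPQ PR QR; split=> //; exists (lpair R (lcompl R)); split.
  split; first by case=> [[|[|k]] ?].
  split; last first.
    move=> w; have [Rw | nRw] := classic (R w).
      by exists (@Ordinal 2 0 isT).
    by exists (@Ordinal 2 1 isT).
  move=> [[|[|i]] ?] [[|[|j]] ?] // ij w; rewrite /lpair /lcompl /= => Rw Rw';
    first [exact: Rw' Rw | exact: Rw Rw' | by case: ij; apply: val_inj].
split=> //; split=> //; exists id; split=> //.
by case=> [[|[|k]] ?].
Qed.

Lemma in_core_lstart_eq (L : lfamily) (k : nat) (B : 'I_k -> lang) (i j : 'I_k)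
    (l l' : letter) :
  nontrivial L -> closed_regvar L -> in_core L B -> i <> j ->
  ~ lfinite (linter (B i) (lstart l)) -> ~ lfinite (linter (B j) (lstart l')) ->
  l = l'.
Proof.
move=> Ln Lr [k_gt1 [[_ [Bdisj _]] core]] ij infi infj; apply: NNPP => ll'.
have cpB2 : is_cp (lpair (linter (B i) (lstart l)) (linter (B j) (lstart l'))).
  by apply: is_cp_lpair => // w [Biw _] [Bjw _]; exact: Bdisj ij w Biw Bjw.
apply: (core 2 _ cpB2 _ isT); first by apply: vle_lpair ij _ _ => // w [].
apply: (in_class_separated (R := lstart l)) => //.
- exact: regular_in_family (regular_lstart l).
- exact: regular_in_family (regular_lcompl (regular_lstart l)).
- by move=> w [].
- move=> w [_ /eqP wl'] /eqP wl; apply: ll'.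
  by rewrite wl in wl'; case: wl'.
Qed.

Lemma lquot_separated (x : word) (A P Q : lang) :
  (forall v, A v -> P (x ++ v)) -> (forall v, ~ A v -> Q (x ++ v)) ->
  (forall w, P w -> Q w -> False) -> forall v, lquot x P v <-> A v.
Proof.
move=> AP AQ PQ v; split; last exact: AP.
by move=> Pxv; apply: NNPP => nAv; exact: PQ _ Pxv (AQ v nAv).
Qed.

Lemma CA_not_in_class (L : lfamily) (A : lang) :
  closed_quot L -> (~ L A \/ ~ L (lcompl A)) -> ~ in_class L (CA A).
Proof.
move=> Lq nLA [_ [Q [[LQ [Qdisj _]] [_ [_ [s [s_inj CAQ]]]]]]].
set ab : 'I_3 := @Ordinal 3 0 isT; set ca : 'I_3 := @Ordinal 3 2 isT.
have disj w : Q (s ab) w -> Q (s ca) w -> False.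
  by apply: Qdisj => /s_inj.
have aA v : A v -> Q (s ab) ([:: la] ++ v) by move=> Av; apply: CAQ; left; exists v.
have aAc v : ~ A v -> Q (s ca) ([:: la] ++ v) by move=> nAv; apply: CAQ; right; exists v.
case: nLA => []; apply; apply: lfamily_ext (Lq [:: la] _ (LQ _)).
- exact: lquot_separated aA aAc disj.
- apply: lquot_separated aAc _ _ => [v /NNPP | w Qcw Qaw]; first exact: aA.
  exact: disj Qaw Qcw.
Qed.

Lemma CA_avoids_letter (A : lang) (l : letter) :
  exists j : 'I_3, forall w, CA A j w -> ~ lstart l w.
Proof.
by case: l; [exists (@Ordinal 3 1 isT) | exists (@Ordinal 3 2 isT) | exists ord0];
  move=> w [[v [_ ->]] | [v [_ ->]]].
Qed.

Lemma CA_not_in_core_below (L : lfamily) (A : lang) (B : 'I_3 -> lang) :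
  nontrivial L -> closed_regvar L -> is_cp B -> vle B (CA A) -> ~ in_core L B.
Proof.
move=> Ln Lr [_ [_ Binf]] [_ [_ [s [s_inj BCA]]]] coreB.
have [l inf0] := infinite_lstart (Binf ord0).
have [j] := CA_avoids_letter A l.
have [s' _ ss'] := injF_bij s_inj.
rewrite -(ss' j); set i := s' j => avoid.
have infi : ~ lfinite (linter (B i) (lstart l)).
  have [-> // | /eqP i0] := eqVneq i ord0.
  have [li infli] := infinite_lstart (Binf i).
  by rewrite -(in_core_lstart_eq Ln Lr coreB i0 infli inf0).
have [w [Biw lw]] := nonfinite_inhabited infi.
exact: avoid w (BCA i w Biw) lw.
Qed.

Theorem theorem3p6 (L : lfamily) (A : lang) :
  nontrivial L -> closed_union L -> closed_marker L -> closed_quot L ->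
  closed_regvar L ->
  (~ L A \/ ~ L (lcompl A)) ->
  ~ in_class L (CA A) /\
  (forall B : 'I_3 -> lang, is_cp B -> vle B (CA A) -> ~ in_core L B).
Proof.
move=> Ln _ _ Lq Lr nLA; split; first exact: CA_not_in_class.
by move=> B; apply: CA_not_in_core_below.
Qed.
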